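(* Let $k\geq0$ and choose one representative $u$ in each orbit $[u]\in[n]^{k+1}/\mathbb{Z}_{k+1}$. Then the set $B=\bigsqcup_{[u]\in[n]^{k+1}/\mathbb{Z}_{k+1}}B_{[u]}$, where \[ B_{[u]}=\{(I-R)e_v=e_v-e_{Rv}\,:\,v\in[u]\setminus\{u\}\}, \] is a basis of $\mathrm{ran}\big((I-R)|_{(\mathbb{C}^n)^{\otimes(k+1)}}\big)$. Consequently, the set $\widetilde B=\bigsqcup_{[u]\in[n]^{k+1}/\mathbb{Z}_{k+1}}\widetilde B_{[u]}$, where \[ \widetilde B_{[u]}=\Big\{\big(\delta_{j,i_1}e_{i_2\cdots i_{k+1}}-2\delta_{j,i_{k+1}}e_{i_1\cdots i_k}+\delta_{j,i_k}e_{i_{k+1}i_1\cdots i_{k-1}}\big)_{1\leq j\leq n}\ :\ i_1i_2\cdots i_{k+1}\in[u]\setminus\{u\}\Big\}, \] is a basis of $\mathcal{X}^{(n)}_k$.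
   Context: Let $\{e_1,\dots,e_n\}$ be an orthonormal basis of $\mathbb{C}^n$. For a word $w=i_1\cdots i_p$ over $[n]=\{1,\dots,n\}$, $e_w=e_{i_1}\otimes\cdots\otimes e_{i_p}\in(\mathbb{C}^n)^{\otimes p}$ (and $e_\epsilon=1$ the vacuum vector of the full Fock space $\mathcal{F}(\mathbb{C}^n)=\mathbb{C}1\oplus\bigoplus_{p\geq1}(\mathbb{C}^n)^{\otimes p}$); $[n]^p$ is the set of words of length $p$. $R$ denotes the cyclic rotation, both on words, $R(i_1\cdots i_{p-1}i_p)=i_pi_1\cdots i_{p-1}$, and on tensors, $R e_{i_1\cdots i_p}=e_{i_pi_1\cdots i_{p-1}}$ (extended linearly); $I$ is the identity. The group $\mathbb{Z}_{k+1}=\mathbb{Z}/(k+1)\mathbb{Z}$ acts on $[n]^{k+1}$ through $R$; $[u]$ is the orbit of $u$ and $[n]^{k+1}/\mathbb{Z}_{k+1}$ the set of orbits. Let $l_je_w=e_{jw}$ and $r_je_w=e_{wj}$ be the left and right creation operators on $\mathcal{F}(\mathbb{C}^n)$. For $k\geq1$, $\mathcal{X}^{(n)}_k=\{((l_j^*-r_j^* )\xi)_{j=1}^n:\xi\in(\mathbb{C}^n)^{\otimes(k+1)}\}\subset[(\mathbb{C}^n)^{\otimes k}]^n$, and $\mathcal{X}^{(n)}_0=\{0\}$. $\delta_{j,i}$ is the Kronecker delta. *)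

From HB Require Import structures.
From mathcomp Require Import all_boot all_order all_algebra.
From mathcomp Require Import complex.
From mathcomp Require Import Rstruct.
Set Implicit Arguments. Unset Strict Implicit. Unset Printing Implicit Defensive.
Import GRing.Theory Num.Theory.
Local Open Scope ring_scope.

Definition C : fieldType := (Rdefinitions.R)[i].

(* words of length p over [n] = {0,..,n-1} (letters 1..n shifted by one) *)
Definition word (n p : nat) := p.-tuple 'I_n.

(* (C^n)^{\otimes p}: coordinates in the orthonormal basis (e_w)_{w in [n]^p};
   for p = 0 this is C (the vacuum level) *)
Definition tensor (n p : nat) := {ffun p.-tuple 'I_n -> C^o}.

Definition e (n p : nat) (w : p.-tuple 'I_n) : tensor n p :=
  [ffun x => (x == w)%:R].

(* cyclic rotation on words: R(i_1 ... i_{p-1} i_p) = i_p i_1 ... i_{p-1} *)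
Definition Rw (n p : nat) (w : p.-tuple 'I_n) : p.-tuple 'I_n := rotr_tuple 1 w.

Definition Rop (n p : nat) (xi : tensor n p) : tensor n p :=
  \sum_(v : p.-tuple 'I_n) xi v *: e (Rw v).

Definition IminusR (n p : nat) : 'End(tensor n p) :=
  linfun (fun xi : tensor n p => xi - Rop xi).

(* adjoints of the creation operators, restricted to level p+1 -> p:
   l_j^* e_{i_1...i_{p+1}} = delta_{j,i_1} e_{i_2...i_{p+1}},
   r_j^* e_{i_1...i_{p+1}} = delta_{j,i_{p+1}} e_{i_1...i_p};
   written coordinatewise. *)
Definition rcons_tuple (n p : nat) (w : p.-tuple 'I_n) (j : 'I_n) : p.+1.-tuple 'I_n :=
  @Tuple p.+1 _ (rcons w j) (introT eqP (etrans (size_rcons w j) (f_equal S (size_tuple w)))).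

Definition lstar (n p : nat) (j : 'I_n) (xi : tensor n p.+1) : tensor n p :=
  [ffun w : p.-tuple 'I_n => xi (cons_tuple j w)].
Definition rstar (n p : nat) (j : 'I_n) (xi : tensor n p.+1) : tensor n p :=
  [ffun w : p.-tuple 'I_n => xi (rcons_tuple w j)].

Definition Xmap (n k : nat) (xi : tensor n k.+1) : {ffun 'I_n -> tensor n k} :=
  [ffun j => lstar j xi - rstar j xi].

Definition Xspace (n k : nat) : {vspace {ffun 'I_n -> tensor n k}} :=
  if k is 0 then 0%VS else limg (linfun (@Xmap n k)).

Definition same_orbit (n p : nat) (u v : p.-tuple 'I_n) : Prop :=
  exists m : nat, v = iter m (@Rw n p) u.

(* the words v with v in [u] \ {u}, u the chosen representative of the orbit
   of v; rep w is the chosen representative of the orbit [w] *)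
Definition nonrep (n p : nat) (rep : p.-tuple 'I_n -> p.-tuple 'I_n)
  : seq (p.-tuple 'I_n) :=
  [seq v <- enum {: p.-tuple 'I_n} | v != rep v].

Definition Bvec (n p : nat) (v : p.-tuple 'I_n) : tensor n p := e v - e (Rw v).

(* for v = i_1 ... i_{k+1}:  i_2 ... i_{k+1},  i_1 ... i_k,  i_{k+1} i_1 ... i_{k-1} *)
Definition tailw (n k : nat) (v : k.+1.-tuple 'I_n) : k.-tuple 'I_n :=
  [tuple tnth v (lift ord0 i) | i < k].
Definition initw (n k : nat) (v : k.+1.-tuple 'I_n) : k.-tuple 'I_n :=
  [tuple tnth v (widen_ord (leqnSn k) i) | i < k].
Definition cycw (n k : nat) (v : k.+1.-tuple 'I_n) : k.-tuple 'I_n :=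
  [tuple (if (i : nat) == 0%N then tnth v ord_max else tnth v (inord i.-1)) | i < k].

Definition Btil (n k : nat) (v : k.+1.-tuple 'I_n) : {ffun 'I_n -> tensor n k} :=
  [ffun j => (j == tnth v ord0)%:R *: e (tailw v)
             - (2 * (j == tnth v ord_max)%:R) *: e (initw v)
             + (j == tnth v (inord k.-1))%:R *: e (cycw v)].

(* sanity: the maps fed to linfun are linear, so linfun agrees with them *)
Lemma Rop_linear (n p : nat) : linear (@Rop n p).
Proof.
move=> a x y; rewrite /Rop scaler_sumr -big_split /=; apply: eq_bigr => v _.
by rewrite !ffunE scalerDl scalerA.
Qed.

Lemma IminusR_linear (n p : nat) : linear (fun xi : tensor n p => xi - Rop xi).
Proof.
move=> a x y; rewrite (Rop_linear a x y) scalerBr opprD addrACA.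
by [].
Qed.

Lemma Xmap_linear (n k : nat) : linear (@Xmap n k).
Proof.
move=> a x y; apply/ffunP => j; rewrite !ffunE.
apply/ffunP => w; rewrite !ffunE /=.
by rewrite scalerBr opprD addrACA.
Qed.

From Pilot Require Import Defs.
From HB Require Import structures.
From mathcomp Require Import all_boot all_order all_algebra.
From mathcomp Require Import complex.
From mathcomp Require Import Rstruct.
From mathcomp Require Import ring zify.
Import GRing.Theory Num.Theory.
Local Open Scope ring_scope.

(* The kernel of I - R consists of the rotation-invariant tensors,
   and it meets the range of I - R trivially, because (I - R) eta summed over
   an orbit telescopes to 0 while an invariant tensor is constant on orbits
   (C has characteristic 0).  Telescoping along the orbit of a representative
   u writes e_u - e_(Ru) through the other vectors of B, so B spans the range;
   a vanishing combination of B is (I - R) a for a coefficient tensor a that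
   is then invariant and zero at the representatives, so a = 0.  Finally
   ((l_j^* - r_j^* ) xi)(w) = xi(R(wj)) - xi(wj), so xi |-> ((l_j^* - r_j^* ) xi)_j
   has the same kernel as I - R: it maps the range of I - R isomorphically
   onto X_k, sending (I - R) e_v to the corresponding vector of B~. *)

Lemma limg_basis_of_eq_lker (K : fieldType) (vT wT : vectType K)
    (f : 'End(vT)) (g : 'Hom(vT, wT)) (X : seq vT) :
  lker g = lker f -> (limg f :&: lker f = 0)%VS -> basis_of (limg f) X ->
  basis_of (limg g) (map g X).
Proof.
move=> kerg cap0 basisX.
have cap0g : (limg f :&: lker g = 0)%VS by rewrite kerg.
have -> : limg g = (g @: limg f)%VS.
  apply/eqP; rewrite eq_sym eqEdim limgS ?subvf //= (limg_dim_eq cap0g).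
  have := limg_ker_dim f fullv; rewrite -(limg_ker_dim g fullv) !capfv kerg.
  by move/addnI ->.
exact: limg_basis_of.
Qed.

Section Rotation.
Context {n p : nat}.
Local Notation word := (p.-tuple 'I_n).
Local Notation R := (@Rw n p).

Lemma Rw_inj : injective R.
Proof. by move=> x y /(congr1 val) /rotr_inj /val_inj. Qed.

Lemma iter_Rw_neq (y : word) i : (0 < i < order R y)%N -> iter i R y != y.
Proof.
case/andP=> i_gt0 /findex_iter findex_i; apply/eqP => iter_i.
by rewrite iter_i findex0 in findex_i; rewrite -findex_i in i_gt0.
Qed.

Lemma sum_orbit_diff (V : zmodType) (f : word -> V) (y : word) :
  \sum_(i < order R y) (f (iter i.+1 R y) - f (iter i R y)) = 0.
Proof.
rewrite -(big_mkord xpredT (fun i => f (iter i.+1 R y) - f (iter i R y))).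
by rewrite telescope_sumr // iter_order ?subrr //; exact: Rw_inj.
Qed.

Definition rot_invariant (xi : tensor n p) := forall y, xi (R y) = xi y.

Lemma rot_invariant_iter xi m y : rot_invariant xi -> xi (iter m R y) = xi y.
Proof. by move=> Rxi; elim: m => //= m <-; apply: Rxi. Qed.

Lemma tensor_expand (xi : tensor n p) : xi = \sum_y xi y *: e y.
Proof.
apply/ffunP => x; rewrite sum_ffunE (bigD1 x) //= big1 => [|y /negbTE nyx].
  by rewrite !ffunE eqxx addr0; exact: (esym (mulr1 _)).
by rewrite !ffunE eq_sym nyx; exact: mulr0.
Qed.

Lemma Rop_e (v : word) : Rop (e v) = e (R v).
Proof.
apply/ffunP => x; rewrite /Rop sum_ffunE (bigD1 v) //= big1 ?addr0.
  by rewrite !ffunE eqxx; exact: mul1r.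
by move=> u /negbTE nuv; rewrite !ffunE nuv; exact: mul0r.
Qed.

Lemma RopE (xi : tensor n p) (y : word) : Rop xi (R y) = xi y.
Proof.
rewrite /Rop sum_ffunE (bigD1 y) //= big1 ?addr0.
  by rewrite !ffunE eqxx; exact: mulr1.
by move=> v /negbTE nvy; rewrite !ffunE (inj_eq Rw_inj) eq_sym nvy; exact: mulr0.
Qed.

Definition id_minus_rot (xi : tensor n p) := xi - Rop xi.
HB.instance Definition _ := GRing.isLinear.Build C (tensor n p) (tensor n p) _
  id_minus_rot (@IminusR_linear n p).

Lemma IminusRE xi : IminusR n p xi = xi - Rop xi.
Proof. exact: (lfunE (id_minus_rot : {linear _ -> _})). Qed.

Lemma IminusR_e v : IminusR n p (e v) = Bvec v.
Proof. by rewrite IminusRE Rop_e. Qed.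

Lemma IminusR_Rw xi y : IminusR n p xi (R y) = xi (R y) - xi y.
Proof. by rewrite IminusRE !ffunE RopE. Qed.

Lemma IminusR_eq0 xi : IminusR n p xi = 0 <-> rot_invariant xi.
Proof.
split=> [xi0 y | Rxi]; first by apply/eqP; rewrite -subr_eq0 -IminusR_Rw xi0 ffunE.
by apply/ffunP => x; rewrite -(f_finv Rw_inj x) IminusR_Rw Rxi subrr ffunE.
Qed.

Lemma limg_IminusR_cap_lker : (limg (IminusR n p) :&: lker (IminusR n p) = 0)%VS.
Proof.
apply/eqP; rewrite -subv0; apply/subvP => _ /memv_capP [/memv_imgP [eta _ ->]].
rewrite memv_ker memv0 => /eqP /IminusR_eq0 Rxi; apply/eqP/ffunP => y.
(* over the orbit of y, xi = (I - R) eta telescopes to 0 and is constant *)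
have := @sum_orbit_diff C^o (fun z => eta z) y.
under eq_bigr => i _ do rewrite [iter i.+1 _ _]iterS -IminusR_Rw -iterS.
under eq_bigr => i _ do rewrite rot_invariant_iter //.
rewrite sumr_const card_ord ffunE => /eqP; rewrite mulrn_eq0 => /orP [|/eqP //].
by rewrite eqn0Ngt order_gt0.
Qed.

Lemma sum_Bvec_orbit y : \sum_(i < order R y) Bvec (iter i R y) = 0.
Proof.
apply/eqP; rewrite -oppr_eq0 -sumrN; apply/eqP.
rewrite -[RHS](@sum_orbit_diff (tensor n p) (@e n p) y).
by apply: eq_bigr => i _; rewrite opprB.
Qed.

Lemma free_Bvec (s : seq word) : uniq s ->
    (forall xi, rot_invariant xi -> (forall y, y \notin s -> xi y = 0) -> xi = 0) ->
  free [seq Bvec v | v <- s].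
Proof.
move=> s_uniq invariant0; rewrite -[map _ _]/(tval (map_tuple (@Bvec n p) (in_tuple s))).
have tnth_inj : injective (tnth (in_tuple s)) by apply/tuple_uniqP.
apply/freeP => kk sum0 i.
(* the combination with coefficients kk is (I - R) a *)
pose a := \sum_j kk j *: e (tnth (in_tuple s) j).
have a_tnth j : a (tnth (in_tuple s) j) = kk j.
  rewrite sum_ffunE (bigD1 j) //= big1 ?ffunE ?eqxx ?addr0; first exact: mulr1.
  move=> j' /negbTE nj'j; rewrite !ffunE (inj_eq tnth_inj) eq_sym nj'j.
  exact: mulr0.
have a_off y : y \notin s -> a y = 0.
  move=> ys; rewrite sum_ffunE big1 // => j _; rewrite !ffunE.
  by case: eqP ys => [-> | _ _]; [rewrite mem_tnth | exact: mulr0].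
have /IminusR_eq0 Ra : IminusR n p a = 0.
  rewrite /a linear_sum -{}[RHS]sum0; apply: eq_bigr => j _.
  rewrite linearZ /= IminusR_e (nth_map (tnth (in_tuple s) j)) //.
  by rewrite [in LHS](tnth_nth (tnth (in_tuple s) j)).
by rewrite -a_tnth (invariant0 a Ra a_off) ffunE.
Qed.

End Rotation.

Section Representatives.
Context {n p : nat} {rep : p.-tuple 'I_n -> p.-tuple 'I_n}.
Hypothesis rep_in_orbit : forall w, same_orbit w (rep w).
Hypothesis rep_const : forall w w', same_orbit w w' -> rep w = rep w'.
Local Notation R := (@Rw n p).

Lemma rep_iter y i : rep (iter i R y) = rep y.
Proof. by symmetry; apply: rep_const; exists i. Qed.

Lemma mem_nonrep v : (v \in nonrep rep) = (v != rep v).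
Proof. by rewrite mem_filter mem_enum andbT. Qed.

Lemma rep_notin_nonrep y : rep y \notin nonrep rep.
Proof. by rewrite mem_nonrep negbK; apply/eqP/rep_const. Qed.

Lemma rot_invariant_rep (xi : tensor n p) y : rot_invariant xi -> xi (rep y) = xi y.
Proof. by have [m ->] := rep_in_orbit y; exact: rot_invariant_iter. Qed.

Lemma Bvec_in_span y : Bvec y \in <<[seq Bvec v | v <- nonrep rep]>>%VS.
Proof.
have [y_rep | y_nonrep] := eqVneq y (rep y); last first.
  by apply/memv_span/map_f; rewrite mem_nonrep.
(* for a representative, the other terms of the orbit sum are all non-representatives *)
have := sum_Bvec_orbit y; have := iter_Rw_neq y.
case: (order R y) (order_gt0 R y) => // N _ neq_y; rewrite big_ord_recl /=.
move/eqP; rewrite addr_eq0 => /eqP ->; rewrite rpredN rpred_sum // => i _.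
apply/memv_span/map_f; rewrite mem_nonrep -iterS rep_iter -y_rep neq_y //.
by rewrite add0n /=; exact: ltn_ord.
Qed.

Lemma span_Bvec_nonrep : <<[seq Bvec v | v <- nonrep rep]>>%VS = limg (IminusR n p).
Proof.
apply/eqP; rewrite eqEsubv; apply/andP; split.
  by apply/span_subvP => _ /mapP [v _ ->]; rewrite -IminusR_e memv_img ?memvf.
apply/subvP => _ /memv_imgP [eta _ ->]; rewrite (tensor_expand eta).
rewrite linear_sum rpred_sum // => y _.
by rewrite linearZ /= rpredZ // IminusR_e Bvec_in_span.
Qed.

Lemma basis_Bvec_nonrep : basis_of (limg (IminusR n p)) [seq Bvec v | v <- nonrep rep].
Proof.
rewrite /basis_of span_Bvec_nonrep eqxx /=.
apply: free_Bvec => [|xi Rxi xi_off]; first by rewrite filter_uniq ?enum_uniq.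
by apply/ffunP => y; rewrite -rot_invariant_rep // xi_off ?rep_notin_nonrep ?ffunE.
Qed.

End Representatives.

Lemma nonrep_len1 n (rep : 1.-tuple 'I_n -> 1.-tuple 'I_n) :
  (forall w, same_orbit w (rep w)) -> nonrep rep = [::].
Proof.
have Rw_id (y : 1.-tuple 'I_n) : Rw y = y.
  by apply: val_inj; case: y => [[|a [|b s]] //= _].
move=> rep_in_orbit; rewrite /nonrep (eq_filter (a2 := pred0)) ?filter_pred0 // => y /=.
have [m ->] := rep_in_orbit y; apply/negbTE; rewrite negbK; apply/eqP.
by elim: m => //= m <-; rewrite Rw_id.
Qed.

Lemma mktuple_nth_eq (A : Type) (k : nat) (x0 : A) (f : 'I_k -> A) (s : seq A) :
  size s = k -> (forall i : 'I_k, f i = nth x0 s i) -> val (mktuple f) = s.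
Proof.
move=> size_s f_nth; apply: (@eq_from_nth _ x0); first by rewrite size_tuple.
move=> i; rewrite size_tuple => lt_i_k.
by have -> : i = Ordinal lt_i_k by []; rewrite nth_mktuple.
Qed.

Section Words.
Context {n : nat}.

Lemma initwE {k} (v : k.+1.-tuple 'I_n) : val (initw v) = take k v.
Proof.
apply: (@mktuple_nth_eq _ _ _ (fun i => tnth v (widen_ord (leqnSn k) i))).
  by rewrite size_takel // size_tuple.
by move=> i; rewrite (tnth_nth (tnth v ord0)) nth_take.
Qed.

Lemma tailwE {k} (v : k.+1.-tuple 'I_n) : val (tailw v) = behead v.
Proof.
apply: (@mktuple_nth_eq _ _ (tnth v ord0) (fun i => tnth v (lift ord0 i))).
  by rewrite size_behead size_tuple.
by move=> i; rewrite (tnth_nth (tnth v ord0)) nth_behead lift0.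
Qed.

Lemma cycwE {k} (v : k.+2.-tuple 'I_n) : val (cycw v) = tnth v ord_max :: take k v.
Proof.
apply: (@mktuple_nth_eq _ _ (tnth v ord0)
  (fun i => if (i : nat) == 0%N then tnth v ord_max else tnth v (inord i.-1))).
  by rewrite /= size_takel // size_tuple; lia.
move=> [[|i] lt_i_k] //=; rewrite (tnth_nth (tnth v ord0)) inordK; last lia.
by rewrite nth_take.
Qed.

Lemma tuple_cons_behead {k} (v : k.+1.-tuple 'I_n) : val v = tnth v ord0 :: behead v.
Proof. by rewrite (tnth_nth (tnth v ord0)); case: v => [[|a s]]. Qed.

Lemma tuple_rcons_take {k} (v : k.+1.-tuple 'I_n) :
  val v = rcons (take k v) (tnth v ord_max).
Proof.
rewrite (tnth_nth (tnth v ord0)) /= -take_nth ?size_tuple //.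
by rewrite take_oversize // size_tuple.
Qed.

Lemma RwE {k} (v : k.+1.-tuple 'I_n) : val (Rw v) = tnth v ord_max :: take k v.
Proof. by rewrite /= [in LHS]tuple_rcons_take rotr1_rcons. Qed.

Lemma RwE_cycw {k} (v : k.+2.-tuple 'I_n) :
  val (Rw v) = rcons (cycw v) (tnth v (inord k)).
Proof.
rewrite RwE cycwE rcons_cons (tnth_nth (tnth v ord0) v (inord k)) inordK //.
by rewrite -take_nth // size_tuple.
Qed.

Lemma Rw_rcons_tuple {k} (w : k.-tuple 'I_n) j : Rw (Defs.rcons_tuple w j) = cons_tuple j w.
Proof. by apply: val_inj; rewrite /= rotr1_rcons. Qed.

Lemma rcons_tuple_initw {k} (v : k.+1.-tuple 'I_n) :
  Defs.rcons_tuple (initw v) (tnth v ord_max) = v.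
Proof. by apply: val_inj; rewrite [RHS]tuple_rcons_take -initwE. Qed.

Lemma cons_tuple_eqE {k} (v : k.+1.-tuple 'I_n) (w : k.-tuple 'I_n) j :
  (cons_tuple j w == v) = (j == tnth v ord0) && (w == tailw v).
Proof.
by rewrite -val_eqE [X in _ == X]tuple_cons_behead /= eqseq_cons -tailwE val_eqE.
Qed.

Lemma cons_tuple_eq_Rw {k} (v : k.+1.-tuple 'I_n) (w : k.-tuple 'I_n) j :
  (cons_tuple j w == Rw v) = (j == tnth v ord_max) && (w == initw v).
Proof. by rewrite -val_eqE [X in _ == X]RwE /= eqseq_cons -initwE val_eqE. Qed.

Lemma rcons_tuple_eqE {k} (v : k.+1.-tuple 'I_n) (w : k.-tuple 'I_n) j :
  (Defs.rcons_tuple w j == v) = (j == tnth v ord_max) && (w == initw v).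
Proof.
rewrite -val_eqE [X in _ == X]tuple_rcons_take /= eqseq_rcons -initwE val_eqE.
by rewrite andbC.
Qed.

Lemma rcons_tuple_eq_Rw {k} (v : k.+2.-tuple 'I_n) (w : k.+1.-tuple 'I_n) j :
  (Defs.rcons_tuple w j == Rw v) = (j == tnth v (inord k)) && (w == cycw v).
Proof.
rewrite -val_eqE [X in _ == X]RwE_cycw -[val (Defs.rcons_tuple w j)]/(rcons w j).
by rewrite eqseq_rcons val_eqE andbC.
Qed.

Lemma Btil_eq {k} (v : k.+2.-tuple 'I_n) : Btil v = Xmap (Bvec v).
Proof.
apply/ffunP => j; apply/ffunP => w; rewrite !ffunE /=.
rewrite cons_tuple_eqE cons_tuple_eq_Rw rcons_tuple_eqE rcons_tuple_eq_Rw.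
rewrite -!mulnb !natrM.
have scaleE (a b : C^o) : a *: b = a * b by [].
by rewrite !scaleE; ring.
Qed.

End Words.

Section Xmap.
Context {n k : nat}.

HB.instance Definition _ := GRing.isLinear.Build C (tensor n k.+1)
  {ffun 'I_n -> tensor n k} _ (@Xmap n k) (@Xmap_linear n k).

Lemma XmapE xi : linfun (@Xmap n k) xi = Xmap xi.
Proof. exact: (lfunE (@Xmap n k : {linear _ -> _})). Qed.

Lemma Xmap_eq0 (xi : tensor n k.+1) : Xmap xi = 0 <-> rot_invariant xi.
Proof.
split=> [xi0 y | Rxi].
  have := congr1 (fun f : {ffun 'I_n -> tensor n k} => f (tnth y ord_max) (initw y)) xi0.
  by rewrite !ffunE -Rw_rcons_tuple rcons_tuple_initw => /eqP; rewrite subr_eq0 => /eqP.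
apply/ffunP => j; apply/ffunP => w.
by rewrite !ffunE -Rw_rcons_tuple Rxi subrr.
Qed.

Lemma lker_Xmap : lker (linfun (@Xmap n k)) = lker (IminusR n k.+1).
Proof.
apply/vspaceP => xi; rewrite !memv_ker XmapE.
by apply/eqP/eqP => [/Xmap_eq0/IminusR_eq0 | /IminusR_eq0/Xmap_eq0].
Qed.

End Xmap.

Theorem proposition3p7 (n k : nat) (rep : k.+1.-tuple 'I_n -> k.+1.-tuple 'I_n)
  (rep_in_orbit : forall w, same_orbit w (rep w))
  (rep_const : forall w w', same_orbit w w' -> rep w = rep w') :
  basis_of (limg (@IminusR n k.+1)) [seq Bvec v | v <- nonrep rep] /\
  basis_of (Xspace n k) [seq Btil v | v <- nonrep rep].
Proof.
have basisB := basis_Bvec_nonrep rep_in_orbit rep_const.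
split=> //; case: k rep rep_in_orbit rep_const basisB => [|k] rep rep_in_orbit _ basisB.
  by rewrite nonrep_len1 //; exact: nil_basis.
have -> : [seq Btil v | v <- nonrep rep]
        = map (linfun (@Xmap n k.+1)) [seq Bvec v | v <- nonrep rep].
  by rewrite -map_comp; apply: eq_map => v; rewrite /= XmapE Btil_eq.
apply: limg_basis_of_eq_lker basisB; first exact: lker_Xmap.
exact: limg_IminusR_cap_lker.
Qed.
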